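(* Let $p$ be a prime and let $R$ be a local nearring which is not a nearfield, whose additive group is $\langle a\rangle+\langle b\rangle\cong C_{p^2}\times C_p$ with $ap^2=0$, $bp=0$, $a+b=b+a$, where $a$ is the identity element of $R$. Then the subgroup $\langle ap\rangle$ is an ideal of $R$.
   Context: A (left) nearring is a set $R$ with operations $+,\cdot$ such that $(R,+)$ is a group, $(R,\cdot)$ a semigroup, and $x(y+z)=xy+xz$ for all $x,y,z$. A nearring with identity is local if its non-invertible elements form a subgroup of $(R,+)$; a nearfield is a nearring with identity in which every nonzero element is invertible. An ideal of $R$ is a normal subgroup $I$ of $(R,+)$ such that $xI\subseteq I$ for all $x\in R$ and $(z+x)y-xy\in I$ for all $x,y\in R$, $z\in I$. Additive notation: $ap$ is $a$ added $p$ times. *)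

From mathcomp Require Import all_boot all_algebra.
Set Implicit Arguments. Unset Strict Implicit. Unset Printing Implicit Defensive.
Import GRing.Theory.
Local Open Scope ring_scope.

Definition left_nearring (R : zmodType) (mul : R -> R -> R) : Prop :=
  (forall x y z, mul x (mul y z) = mul (mul x y) z) /\
  (forall x y z, mul x (y + z) = mul x y + mul x z).

Definition is_identity (R : zmodType) (mul : R -> R -> R) (e : R) : Prop :=
  forall x, mul e x = x /\ mul x e = x.

Definition invertible (R : zmodType) (mul : R -> R -> R) (e x : R) : Prop :=
  exists y, mul x y = e /\ mul y x = e.

Definition add_subgroup (R : zmodType) (S : R -> Prop) : Prop :=
  S 0 /\ (forall x y, S x -> S y -> S (x - y)).

Definition local_nearring (R : zmodType) (mul : R -> R -> R) (e : R) : Prop :=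
  add_subgroup (fun x => ~ invertible mul e x).

Definition nearfield (R : zmodType) (mul : R -> R -> R) (e : R) : Prop :=
  forall x, x != 0 -> invertible mul e x.

Definition nr_ideal (R : zmodType) (mul : R -> R -> R) (I : R -> Prop) : Prop :=
  add_subgroup I /\
  (forall x z, I z -> I (x + z - x)) /\
  (forall x z, I z -> I (mul x z)) /\
  (forall x y z, I z -> I (mul (z + x) y - mul x y)).

Definition cyc_add (R : zmodType) (g : R) : R -> Prop :=
  fun x => exists k : nat, x = g *+ k.

From mathcomp Require Import all_boot all_algebra.
Import GRing.Theory.
Local Open Scope ring_scope.

(** Write [e = ap]. Left distributivity gives [x(e k) = (xp) k], and [xp] always
  lies in [<e>], so [<e>] absorbs left multiplication; since the additive
  group is abelian and [(z + x)(a i + b j) - x(a i + b j)] equals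
  [z i + ((z + x) b - x b) j], it remains to show [(e k + x) b - x b ∈ <e>].
  If [px = 0], then [s = e k + x] satisfies [x s = x x] and [s x = s s]; as
  [(w v) b = (w b) g] whenever [pw = 0] and [g] is the [b]-coordinate of
  [v b], the [b]-coordinates [g] of [x b] and [g'] of [s b] satisfy
  [g g' = g g] and [g' g = g' g'] modulo [p], hence [g = g'].
  Otherwise [x = a i + b j] with [p ∤ i], and [e k + x = x (a + e m)] for a
  suitable [m]; the powers of [u = a + e m] show, via Fermat's little
  theorem, that [u b = b + e t], so [(e k + x) b - x b = x (e t) ∈ <e>]. *)

Lemma mulrn_eq_mod {V : zmodType} {x : V} {n m m'} :
  x *+ n = 0 -> (m = m' %[mod n])%N -> x *+ m = x *+ m'.
Proof.
move=> xn0 Em; have mulrn_mod k : x *+ k = x *+ (k %% n).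
  by rewrite {1}(divn_eq k n) mulrnDr mulrnA mulrnAC xn0 mul0rn add0r.
by rewrite mulrn_mod Em -mulrn_mod.
Qed.

Lemma Fp_natr_eq {p m n : nat} : prime p ->
  ((m%:R : 'F_p) = n%:R) <-> (m = n %[mod p])%N.
Proof.
move=> p_pr; split; first by move/(congr1 val); rewrite /= !val_Fp_nat.
by move=> Emn; apply: val_inj; rewrite /= !val_Fp_nat.
Qed.

Lemma modn_inv_exists {p i} k : prime p -> ~~ (p %| i)%N ->
  exists m, (i * m = k %[mod p])%N.
Proof.
move=> p_pr p_ndvd_i.
have i_neq0 : (i%:R : 'F_p) != 0.
  by apply: contra p_ndvd_i => /eqP/(congr1 val); rewrite /= val_Fp_nat // => /eqP.
exists (val ((i%:R : 'F_p)^-1 * k%:R)).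
by apply/(Fp_natr_eq p_pr); rewrite natrM natr_Zp mulrA mulfV // mul1r.
Qed.

Lemma eq_of_mulr_eqs (F : idomainType) (x y : F) :
  x * y = x * x -> y * x = y * y -> x = y.
Proof.
move=> E1 E2; have : (x - y) * (x - y) = 0.
  by rewrite mulrBl !mulrBr -E1 -E2 !subrr.
by move/eqP; rewrite mulf_eq0 orbb subr_eq0 => /eqP.
Qed.

Lemma eqn_mod_of_muln_eqs {p x y} : prime p ->
  (x * y = x * x %[mod p])%N -> (y * x = y * y %[mod p])%N -> (x = y %[mod p])%N.
Proof.
move=> p_pr /(Fp_natr_eq p_pr) E1 /(Fp_natr_eq p_pr) E2.
by apply/(Fp_natr_eq p_pr); apply: eq_of_mulr_eqs; rewrite -!natrM.
Qed.

Section CyclicSubgroup.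
Context {V : zmodType} {g : V}.

Lemma cyc_add_natmul k : cyc_add g (g *+ k).
Proof. by exists k. Qed.

Lemma cyc_addD x y : cyc_add g x -> cyc_add g y -> cyc_add g (x + y).
Proof. by move=> [k ->] [l ->]; exists (k + l)%N; rewrite mulrnDr. Qed.

Lemma cyc_addMn x n : cyc_add g x -> cyc_add g (x *+ n).
Proof. by move=> [k ->]; exists (k * n)%N; rewrite mulrnA. Qed.

Context {n : nat} (n_gt0 : (0 < n)%N) (g_n : g *+ n = 0).

Lemma cyc_addN x : cyc_add g x -> cyc_add g (- x).
Proof.
move=> [k ->]; exists (k * n - k)%N.
by rewrite mulrnBr ?leq_pmulr // mulrnA mulrnAC g_n mul0rn sub0r.
Qed.

Lemma cyc_addB x y : cyc_add g x -> cyc_add g y -> cyc_add g (x - y).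
Proof. by move=> Ix Iy; apply: cyc_addD => //; apply: cyc_addN. Qed.

Lemma cyc_add_subgroup : add_subgroup (cyc_add g).
Proof. by split; [exists 0%N | exact: cyc_addB]. Qed.

End CyclicSubgroup.

Section LeftNearring.
Context {R : zmodType} {mul : R -> R -> R}.
Context (mulDr : forall x y z, mul x (y + z) = mul x y + mul x z).

Lemma nr_mulr0 x : mul x 0 = 0.
Proof. by apply: (addrI (mul x 0)); rewrite -mulDr !addr0. Qed.

Lemma nr_mulrn x y n : mul x (y *+ n) = mul x y *+ n.
Proof.
by elim: n => [|n IHn]; rewrite ?mulr0n ?nr_mulr0 // !mulrS mulDr IHn.
Qed.

End LeftNearring.

Section NatmulPIdeal.
Context {p : nat} {R : zmodType} {mul : R -> R -> R} {a b : R}.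
Hypotheses (p_pr : prime p)
  (mulA : forall x y z, mul x (mul y z) = mul (mul x y) z)
  (mulDr : forall x y z, mul x (y + z) = mul x y + mul x z)
  (mul1r : forall x, mul a x = x) (mulr1 : forall x, mul x a = x)
  (a_p2 : a *+ (p ^ 2) = 0) (b_p : b *+ p = 0)
  (gen_ab : forall x, exists i j : nat, x = a *+ i + b *+ j)
  (indep_ab : forall i j : nat,
     a *+ i + b *+ j = 0 -> ((p ^ 2 %| i) && (p %| j))%N).

Local Notation e := (a *+ p).
Local Notation I := (cyc_add e).

Lemma e_p : e *+ p = 0.
Proof. by rewrite -mulrnA mulnn a_p2. Qed.

Lemma mul_natmul_id x n : mul x (a *+ n) = x *+ n.
Proof. by rewrite (nr_mulrn mulDr) mulr1. Qed.

Lemma mul_e x k : mul x (e *+ k) = x *+ p *+ k.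
Proof. by rewrite -mulrnA mul_natmul_id mulrnA. Qed.

Lemma natmul_p_coord i j : (a *+ i + b *+ j) *+ p = e *+ i.
Proof. by rewrite mulrnDl [b *+ j *+ p]mulrnAC b_p mul0rn addr0 mulrnAC. Qed.

Lemma natmul_p_in_I x : I (x *+ p).
Proof. by have [i [j ->]] := gen_ab x; rewrite natmul_p_coord; exists i. Qed.

Lemma ptorsion_coord {w} : w *+ p = 0 -> exists q j : nat, w = e *+ q + b *+ j.
Proof.
move=> w_p; have [i [j Ew]] := gen_ab w.
have /andP[p2_dvd_ip _] : ((p ^ 2 %| i * p) && (p %| 0))%N.
  apply: indep_ab; rewrite mulr0n addr0 mulrnA -w_p Ew mulrnDl.
  by rewrite [b *+ j *+ p]mulrnAC b_p mul0rn addr0.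
have p_dvd_i : (p %| i)%N by rewrite -(@dvdn_pmul2r p) ?prime_gt0 // mulnn.
by exists (i %/ p)%N, j; rewrite Ew -mulrnA mulnC divnK.
Qed.

Lemma b_coord_mod q j q' j' :
  e *+ q + b *+ j = e *+ q' + b *+ j' -> (j = j' %[mod p])%N.
Proof.
rewrite -!mulrnA => E.
have [i2 [j2 Eopp]] := gen_ab (- (a *+ (p * q') + b *+ j')).
have sum0 i l : a *+ i + b *+ l = a *+ (p * q') + b *+ j' ->
    a *+ (i + i2) + b *+ (l + j2) = 0.
  by move=> Eil; rewrite !mulrnDr addrACA -Eopp Eil subrr.
have /andP[_ /eqP dvd_j] := indep_ab _ _ (sum0 _ _ E).
have /andP[_ /eqP dvd_j'] := indep_ab _ _ (sum0 _ _ erefl).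
by apply/eqP; rewrite -(eqn_modDr j2) dvd_j dvd_j'.
Qed.

Lemma mul_b_ptorsion w : mul w b *+ p = 0.
Proof. by rewrite -(nr_mulrn mulDr) b_p (nr_mulr0 mulDr). Qed.

Lemma mul_ptorsion_b {u v k g} : u *+ p = 0 -> mul v b = e *+ k + b *+ g ->
  mul (mul u v) b = mul u b *+ g.
Proof.
by move=> u_p vb; rewrite -mulA vb mulDr mul_e u_p mul0rn add0r (nr_mulrn mulDr).
Qed.

Lemma b_coord_mul {r s k g k' g'} : r *+ p = 0 -> mul r s = mul r r ->
  mul r b = e *+ k + b *+ g -> mul s b = e *+ k' + b *+ g' ->
  (g * g' = g * g %[mod p])%N.
Proof.
move=> r_p rs rb sb; apply: (b_coord_mod (k * g') _ (k * g)).
rewrite !mulrnA -!mulrnDl -rb -(mul_ptorsion_b r_p sb) rs.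
by rewrite (mul_ptorsion_b r_p rb).
Qed.

Lemma mul_unit_shift_b m : exists t, mul (a + e *+ m) b = b + e *+ t.
Proof.
set u := a + e *+ m.
have [k [g ub]] := ptorsion_coord (mul_b_ptorsion u).
have u_p : u *+ p = e by rewrite mulrnDl [e *+ m *+ p]mulrnAC e_p mul0rn addr0.
pose v n := a + e *+ (m * n).
have uv n : mul u (v n) = v n.+1.
  by rewrite /v mulDr mulr1 mul_e u_p -addrA -mulrnDr mulnS.
have vb n : exists c, mul (v n) b = e *+ c + b *+ (g ^ n).
  elim: n => [|n [c IHn]].
    by exists 0%N; rewrite /v muln0 !mulr0n addr0 add0r expn0 mulr1n mul1r.
  exists (c + k * g ^ n)%N.
  rewrite -uv -mulA IHn mulDr mul_e u_p (nr_mulrn mulDr) ub mulrnDl mulrnDr.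
  by rewrite -!mulrnA addrA expnS.
have [c vpb] := vb p.
have v_p : v p = a by rewrite /v mulnC mulrnA e_p mul0rn addr0.
rewrite v_p mul1r in vpb.
have g_p : (1 = g ^ p %[mod p])%N.
  by apply: (b_coord_mod 0 1 c); rewrite mulr0n add0r mulr1n.
have g1 : (g = 1 %[mod p])%N by rewrite -fermat_little // -g_p.
by exists k; rewrite ub (mulrn_eq_mod b_p g1) addrC.
Qed.

Lemma ptorsion_shift_mul_b r k : r *+ p = 0 -> I (mul (e *+ k + r) b - mul r b).
Proof.
move=> r_p; set s := e *+ k + r.
have s_p : s *+ p = 0.
  by rewrite mulrnDl r_p addr0 [e *+ k *+ p]mulrnAC e_p mul0rn.
have rs : mul r s = mul r r by rewrite mulDr mul_e r_p mul0rn add0r.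
have sr : mul s r = mul s s by rewrite {2}/s mulDr mul_e s_p mul0rn add0r.
have [k1 [g1 rb]] := ptorsion_coord (mul_b_ptorsion r).
have [k2 [g2 sb]] := ptorsion_coord (mul_b_ptorsion s).
have g12 : (g1 = g2 %[mod p])%N.
  exact: eqn_mod_of_muln_eqs p_pr (b_coord_mul r_p rs rb sb)
    (b_coord_mul s_p sr sb rb).
rewrite sb rb (mulrn_eq_mod b_p g12) opprD addrACA subrr addr0.
by apply: (cyc_addB (prime_gt0 p_pr) e_p); apply: cyc_add_natmul.
Qed.

Lemma coprime_shift_mul_b {x i k} : x *+ p = e *+ i -> ~~ (p %| i)%N ->
  I (mul (e *+ k + x) b - mul x b).
Proof.
move=> x_p p_ndvd_i; have [m im_k] := modn_inv_exists k p_pr p_ndvd_i.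
have xu : mul x (a + e *+ m) = e *+ k + x.
  by rewrite mulDr mulr1 mul_e x_p -mulrnA (mulrn_eq_mod e_p im_k) addrC.
have [t ut] := mul_unit_shift_b m.
rewrite -xu -mulA ut mulDr mul_e addrAC subrr add0r.
exact/cyc_addMn/natmul_p_in_I.
Qed.

Lemma shift_mul_b x z : I z -> I (mul (z + x) b - mul x b).
Proof.
move=> [k ->]; have [i [j Ex]] := gen_ab x.
have x_p : x *+ p = e *+ i by rewrite Ex natmul_p_coord.
have [p_dvd_i | p_ndvd_i] := boolP (p %| i)%N; last first.
  exact: coprime_shift_mul_b x_p p_ndvd_i.
apply: ptorsion_shift_mul_b.
by rewrite x_p (mulrn_eq_mod e_p (_ : i = 0 %[mod p])) // mod0n; apply/eqP.
Qed.

Lemma nr_ideal_natmul_p : nr_ideal mul I.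
Proof.
split; first exact: cyc_add_subgroup (prime_gt0 p_pr) e_p.
split; first by move=> x z Iz; rewrite (addrC x) addrK.
split; first by move=> x _ [k ->]; rewrite mul_e; apply/cyc_addMn/natmul_p_in_I.
move=> x y z Iz; have [i [j ->]] := gen_ab y.
rewrite !mulDr !mul_natmul_id !(nr_mulrn mulDr) mulrnDl opprD addrACA addrK.
rewrite -mulrnBl.
by apply: cyc_addD; apply: cyc_addMn; [|apply: shift_mul_b].
Qed.

End NatmulPIdeal.

Theorem lemma10 (p : nat) (R : zmodType) (mul : R -> R -> R) (a b : R) :
  prime p ->
  left_nearring mul ->
  is_identity mul a ->
  local_nearring mul a ->
  ~ nearfield mul a ->
  (* additive group = <a> + <b>, isomorphic to C_{p^2} x C_p *)
  a *+ (p ^ 2) = 0 ->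
  b *+ p = 0 ->
  a + b = b + a ->
  (forall x : R, exists i j : nat, x = a *+ i + b *+ j) ->
  (forall i j : nat, a *+ i + b *+ j = 0 -> ((p ^ 2 %| i) && (p %| j))%N) ->
  nr_ideal mul (cyc_add (a *+ p)).
Proof.
move=> p_pr [mulA mulDr] mul1 _ _ a_p2 b_p _ gen_ab indep_ab.
exact: (nr_ideal_natmul_p p_pr mulA mulDr (fun x => (mul1 x).1)
  (fun x => (mul1 x).2) a_p2 b_p gen_ab indep_ab).
Qed.
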